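(* Let $H$ be a real Hilbert space, $A:H\to2^H$ a maximal monotone operator with $\mathrm{zer}A\ne\emptyset$, $(\gamma_n)$ a sequence in $(0,\infty)$, $x_0\in H$ and $x_{n+1}=J_{\gamma_nA}x_n$. Then: (i) for all $n\in\mathbb{N}$, $m\ge1$ and $p\in H$, $\|x_{n+m}-p\|\le\|x_n-p\|+\sum_{i=n}^{n+m-1}\|p-J_{\gamma_iA}p\|$; (ii) $(x_n)$ is uniformly Fej\'er monotone w.r.t. $\mathrm{zer}A$ with modulus $\chi(n,m,r)=\max\{n+m-1,m(r+1)\}$, i.e. for all $r,n,m\in\mathbb{N}$ and all $p\in AF_{\chi(n,m,r)}$, $\|x_{n+l}-p\|<\|x_n-p\|+\frac1{r+1}$ for all $l\le m$.
   Context: $J_{\gamma A}:=(Id+\gamma A)^{-1}$ is the resolvent of $\gamma A$ (single-valued, defined on $H$). $AF_k:=\bigcap_{i\le k}\{x\in H\mid\|x-J_{\gamma_iA}x\|\le\frac1{k+1}\}$, so that $\mathrm{zer}A=\bigcap_kAF_k$. *)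

From HB Require Import structures.
From mathcomp Require Import all_boot all_order all_algebra.
From mathcomp Require Import all_classical all_reals all_analysis.
Set Implicit Arguments. Unset Strict Implicit. Unset Printing Implicit Defensive.
Import Order.TTheory GRing.Theory Num.Theory.
Import numFieldNormedType.Exports.
Local Open Scope classical_set_scope.
Local Open Scope ring_scope.

(* A real Hilbert space is modelled as a complete normed R-module [V]
   together with an inner product [ip] inducing its norm. *)
Definition inner_product {R : realType} {V : normedModType R}
  (ip : V -> V -> R) : Prop :=
  [/\ (forall x y, ip x y = ip y x),
      (forall (a : R) (x y z : V), ip (a *: x + y) z = a * ip x z + ip y z)
    & (forall x, ip x x = `|x| ^+ 2)].

Definition monotone_op {R : realType} {V : normedModType R}
  (ip : V -> V -> R) (A : V -> set V) : Prop :=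
  forall x y u v, A x u -> A y v -> 0 <= ip (x - y) (u - v).

Definition maximal_monotone {R : realType} {V : normedModType R}
  (ip : V -> V -> R) (A : V -> set V) : Prop :=
  monotone_op ip A /\
  forall B : V -> set V, monotone_op ip B ->
    (forall x u, A x u -> B x u) -> forall x u, B x u -> A x u.

Definition zer {R : realType} {V : normedModType R} (A : V -> set V) : set V :=
  [set x | A x 0].

(* Resolvent J_{gA} = (Id + gA)^{-1}: J x is the (unique, for A maximal
   monotone and g > 0, by Minty) y with x \in y + g A y,
   i.e. g^-1 (x - y) \in A y. *)
Definition resolvent {R : realType} {V : normedModType R}
  (A : V -> set V) (g : R) (x : V) : V :=
  get [set y | A y (g^-1 *: (x - y))].

Definition AF {R : realType} {V : normedModType R}
  (A : V -> set V) (gamma : nat -> R) (k : nat) : set V :=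
  [set x | forall i, (i <= k)%N ->
     `|x - resolvent A (gamma i) x| <= (k.+1%:R)^-1].

Definition chi (n m r : nat) : nat := maxn (n + m - 1) (m * r.+1).

From HB Require Import structures.
From mathcomp Require Import all_boot all_order all_algebra.
From mathcomp Require Import all_classical all_reals all_analysis.
From mathcomp Require Import ring lra zify.
Set Implicit Arguments.
Unset Strict Implicit.
Unset Printing Implicit Defensive.
Import Order.TTheory GRing.Theory Num.Theory.
Import numFieldNormedType.Exports.
Local Open Scope classical_set_scope.
Local Open Scope ring_scope.

(* The resolvents J_{gA} are nonexpansive, so (i) follows from the triangle
   inequality by induction on m, and (ii) from (i): for p in AF_chi every term
   of the sum is at most 1/(chi+1), and m/(chi+1) < 1/(r+1).

   Nonexpansiveness needs J_{gA} z to really solve z \in y + gAy (Minty's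
   theorem). If G is the graph of gA shifted by (-z, 0), a solution is a point
   w with <w - x, w + u> <= 0 for all (x, u) in G, i.e. a common point of the
   closed balls with centres (x - u)/2 and radii |x + u|/2. For finitely many
   pairs, a minimiser w of the largest of these defects works: otherwise, by
   monotonicity, the gradients 2w + u - x of the almost maximal defects have a
   convex hull away from 0, and moving w against its minimal-norm point lowers
   all defects at once. For G itself, the minimisers for finite subfamilies
   form a Cauchy net, by the uniform convexity of the defects, and its limit
   lies in every ball. *)

Section SequenceLimits.
Variables (R : realType) (V : normedModType R).
Implicit Types (u v : nat -> V) (c e : R).

Lemma near_harmonic_lt c e : 0 < e -> \forall n \near \oo, c * n.+1%:R^-1 < e.
Proof.
move=> e0; have : c * harmonic n @[n --> \oo] --> c * 0.
  by apply: cvgM; [exact: cvg_cst | exact: cvg_harmonic].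
by rewrite mulr0 => /cvgr_lt; apply.
Qed.

Lemma cvg_le_const (r : nat -> R) l b :
  r n @[n --> \oo] --> l -> (forall n, r n <= b) -> l <= b.
Proof. by move=> rl rb; apply: (closed_cvg _ (@closed_le R b) _ _ rl); apply: nearW. Qed.

Lemma cvg_ge_const (r : nat -> R) l b :
  r n @[n --> \oo] --> l -> (forall n, b <= r n) -> b <= l.
Proof. by move=> rl rb; apply: (closed_cvg _ (@closed_ge R b) _ _ rl); apply: nearW. Qed.

Lemma cvg_le_harmonic (r : nat -> R) l b :
  r n @[n --> \oo] --> l -> (forall n, r n <= b + n.+1%:R^-1) -> l <= b.
Proof.
move=> rl rb; have : r n - harmonic n @[n --> \oo] --> l - 0.
  by apply: cvgB => //; exact: cvg_harmonic.
by rewrite subr0 => /cvg_le_const; apply => n /=; rewrite lerBlDr.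
Qed.

Lemma continuous_sqr_norm : continuous (fun x : V => `|x| ^+ 2).
Proof.
have -> : (fun x : V => `|x| ^+ 2) = (fun x => `|x| * `|x|).
  by apply: funext => x; rewrite expr2.
by move=> x; apply: cvgM; exact: norm_continuous.
Qed.

Lemma cvg_sqr_norm u l : u n @[n --> \oo] --> l -> `|u n| ^+ 2 @[n --> \oo] --> `|l| ^+ 2.
Proof.
move=> ul; under eq_fun do rewrite expr2.
by rewrite expr2; apply: cvgM; exact: cvg_norm.
Qed.

Lemma lt_sqr_norm (x : V) e : 0 < e -> `|x| ^+ 2 < e ^+ 2 -> `|x| < e.
Proof. by move=> e0 h; rewrite -(@ltr_pXn2r _ 2) ?nnegrE ?(ltW e0). Qed.

Lemma cvg_sqr_dist_harmonic u v (l : V) c : u n @[n --> \oo] --> l ->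
  (forall n, `|v n - u n| ^+ 2 <= c * n.+1%:R^-1) -> v n @[n --> \oo] --> l.
Proof.
move=> ul vu; have -> : v = u + (v - u) by apply: funext => n /=; rewrite addrC subrK.
rewrite -[l]addr0; apply: cvgD => //; apply/cvgr0Pnorm_lt => e e0.
near=> n; apply: lt_sqr_norm => //; apply: le_lt_trans (vu n) _.
by near: n; apply: near_harmonic_lt; rewrite exprn_gt0.
Unshelve. all: by end_near.
Qed.

End SequenceLimits.

Lemma ge0_of_perturbation (R : realFieldType) (g D : R) :
  (forall t, 0 < t -> t <= 1 -> 0 <= g + t * D) -> 0 <= g.
Proof.
move=> gtD; rewrite leNgt; apply/negP => g0.
pose S := - g + `|D| + 1; have S0 : 0 < S by rewrite /S; have := normr_ge0 D; lra.
pose t := - g / S; have tS : t * S = - g by rewrite /t divfK // gt_eqF.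
have t0 : 0 < t by rewrite divr_gt0 // oppr_gt0.
have t1 : t <= 1 by rewrite /t ler_pdivrMr // mul1r /S; have := normr_ge0 D; lra.
have : t * D <= t * `|D| by rewrite ler_pM2l // ler_norm.
have := gtD t t0 t1; move: tS; rewrite /S; nra.
Qed.

Definition midpoint_convex (R : realFieldType) (V : lmodType R) (C : set V) :=
  forall a b, C a -> C b -> C (2^-1 *: (a + b)).

Section ConvexHull.
Variables (R : realFieldType) (V : lmodType R) (n : nat).
Variables (a : 'I_n -> V) (P : pred 'I_n).

Definition convex_hull : set V :=
  [set y | exists lam : 'I_n -> R, [/\ forall i, 0 <= lam i, \sum_i lam i = 1,
     forall i, lam i != 0 -> P i & y = \sum_i lam i *: a i]].

Lemma convex_hull_point i : P i -> convex_hull (a i).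
Proof.
move=> Pi; exists (fun j => (j == i)%:R); split.
- by move=> j; rewrite ler0n.
- by rewrite (bigD1 i) //= eqxx big1 ?addr0 // => j /negbTE ->.
- by move=> j; case: (eqVneq j i) => [-> _ //|_]; rewrite eqxx.
- by rewrite (bigD1 i) //= eqxx scale1r big1 ?addr0 // => j /negbTE ->; rewrite scale0r.
Qed.

Lemma convex_hull_segment y z (t : R) : convex_hull y -> convex_hull z ->
  0 <= t -> t <= 1 -> convex_hull ((1 - t) *: y + t *: z).
Proof.
move=> [ly [ly0 ly1 lyP ->]] [lz [lz0 lz1 lzP ->]] t0 t1.
exists (fun i => (1 - t) * ly i + t * lz i); split.
- by move=> i; apply: addr_ge0; apply: mulr_ge0 => //; lra.
- by rewrite big_split /= -!mulr_sumr ly1 lz1; ring.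
- move=> i /=; have [/eqP ly_i|/lyP //] := boolP (ly i == 0).
  by rewrite ly_i mulr0 add0r mulf_eq0 negb_or => /andP[_ /lzP].
- by rewrite !scaler_sumr -big_split /=; apply: eq_bigr => i _; rewrite !scalerA -scalerDl.
Qed.

Lemma midpoint_convex_hull : midpoint_convex convex_hull.
Proof.
move=> y z Cy Cz; have half : 1 - 2^-1 = 2^-1 :> R by lra.
have -> : 2^-1 *: (y + z) = (1 - 2^-1) *: y + 2^-1 *: z by rewrite half scalerDr.
by apply: convex_hull_segment => //; lra.
Qed.

End ConvexHull.

Section Minimization.
Variables (R : realType) (V : completeNormedModType R).

Lemma cauchy_sqr_dist_harmonic (u : nat -> V) (c : R) :
  (forall n k, `|u n - u k| ^+ 2 <= c * n.+1%:R^-1 + c * k.+1%:R^-1) ->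
  cvg (u n @[n --> \oo]).
Proof.
move=> uu; apply/cauchy_cvgP/cauchyP => e e0.
have [N _ HN] : \forall n \near \oo, c * n.+1%:R^-1 < e ^+ 2 / 2.
  by apply: near_harmonic_lt; rewrite divr_gt0 // exprn_gt0.
exists (u N); apply: filterS (nbhs_infty_ge N) => n Nn.
rewrite -ball_normE /ball_ /=; apply: lt_sqr_norm => //.
apply: le_lt_trans (uu N n) _; have /= := HN N (leqnn N); have /= := HN n Nn.
by move: (c / N.+1%:R) (c / n.+1%:R) (e ^+ 2) => a b E; lra.
Qed.

Lemma exists_minimizer (C : set V) (f : V -> R) (lb : R) :
  C !=set0 -> midpoint_convex C -> (forall z, C z -> lb <= f z) ->
  (forall a b, C a -> C b ->
     f (2^-1 *: (a + b)) <= 2^-1 * (f a + f b) - 4^-1 * `|a - b| ^+ 2) ->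
  continuous f ->
  exists y (u : nat -> V),
    [/\ forall n, C (u n), u n @[n --> \oo] --> y & forall z, C z -> f y <= f z].
Proof.
move=> [z0 Cz0] Cmid flb fmid fcont.
have fC_inf : has_inf (f @` C).
  by split; [exists (f z0), z0 | exists lb => _ [z Cz <-]; exact: flb].
set d := inf (f @` C).
have d_le z : C z -> d <= f z by move=> Cz; apply: (ge_inf fC_inf.2); exists z.
have near_inf n : exists z, C z /\ f z < d + n.+1%:R^-1.
  have [|_ [z Cz <-] fz] := @inf_adherent _ _ n.+1%:R^-1 _ fC_inf; first by rewrite invr_gt0.
  by exists z.
have [u Cu] := choice near_inf.
have u_cauchy n k : `|u n - u k| ^+ 2 <= 2 * n.+1%:R^-1 + 2 * k.+1%:R^-1.
  have [Cn fn] := Cu n; have [Ck fk] := Cu k.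
  have := d_le _ (Cmid _ _ Cn Ck); have := fmid _ _ Cn Ck.
  move: fn fk; move: (n.+1%:R^-1) (k.+1%:R^-1) (`|u n - u k| ^+ 2) => a b X; lra.
have u_cvg := cauchy_sqr_dist_harmonic u_cauchy.
exists (lim (u n @[n --> \oo])), u; split => // [n|z Cz]; first by case: (Cu n).
apply: le_trans (d_le _ Cz); apply: (cvg_le_harmonic (continuous_cvg _ (fcont _) u_cvg)) => n.
by case: (Cu n) => _ /ltW.
Qed.

End Minimization.


Section InnerProductSpace.
Variables (R : realType) (V : completeNormedModType R) (ip : V -> V -> R).
Hypothesis ip_inner : inner_product ip.
Implicit Types (a b c x y z : V).

Lemma ipC x y : ip x y = ip y x.
Proof. by case: ip_inner. Qed.
Lemma ipxx x : ip x x = `|x| ^+ 2.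
Proof. by case: ip_inner. Qed.
Lemma ipZDl (a : R) x y z : ip (a *: x + y) z = a * ip x z + ip y z.
Proof. by case: ip_inner. Qed.
Lemma ip0l z : ip 0 z = 0.
Proof. by have := ipZDl 1 0 0 z; rewrite scale1r addr0 mul1r; lra. Qed.
Lemma ipDl x y z : ip (x + y) z = ip x z + ip y z.
Proof. by rewrite -{1}(scale1r x) ipZDl mul1r. Qed.
Lemma ipZl (a : R) x z : ip (a *: x) z = a * ip x z.
Proof. by rewrite -(addr0 (a *: x)) ipZDl ip0l addr0. Qed.
Lemma ipNl x z : ip (- x) z = - ip x z.
Proof. by rewrite -scaleN1r ipZl mulN1r. Qed.
Lemma ipBl x y z : ip (x - y) z = ip x z - ip y z.
Proof. by rewrite ipDl ipNl. Qed.
Lemma ip0r z : ip z 0 = 0.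
Proof. by rewrite ipC ip0l. Qed.
Lemma ipDr x y z : ip z (x + y) = ip z x + ip z y.
Proof. by rewrite ipC ipDl !(ipC z). Qed.
Lemma ipZr (a : R) x z : ip z (a *: x) = a * ip z x.
Proof. by rewrite ipC ipZl ipC. Qed.
Lemma ipNr x z : ip z (- x) = - ip z x.
Proof. by rewrite ipC ipNl ipC. Qed.
Lemma ipBr x y z : ip z (x - y) = ip z x - ip z y.
Proof. by rewrite ipDr ipNr. Qed.

Lemma ip_suml n (F : 'I_n -> V) z : ip (\sum_i F i) z = \sum_i ip (F i) z.
Proof. by elim/big_rec2: _ => [|i y1 y2 _ <-]; rewrite ?ip0l ?ipDl. Qed.
Lemma ip_sumr n (F : 'I_n -> V) z : ip z (\sum_i F i) = \sum_i ip z (F i).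
Proof. by rewrite ipC ip_suml; apply: eq_bigr => i _; rewrite ipC. Qed.

Ltac ip_expand :=
  rewrite -?ipxx ?(ipDl, ipDr, ipBl, ipBr, ipNl, ipNr, ipZl, ipZr, ip0l, ip0r).

Lemma sqr_normD x y : `|x + y| ^+ 2 = `|x| ^+ 2 + 2 * ip x y + `|y| ^+ 2.
Proof. by ip_expand; rewrite (ipC y x); ring. Qed.

Lemma ip_le_sqr_norm x y : 2 * ip x y <= `|x| ^+ 2 + `|y| ^+ 2.
Proof.
have := sqr_normD x (- y); rewrite ipNr normrN.
have := sqr_ge0 `|x - y|; lra.
Qed.

Lemma sqr_dist_le a b c : `|a - b| ^+ 2 <= 2 * `|a - c| ^+ 2 + 2 * `|c - b| ^+ 2.
Proof.
have -> : a - b = (a - c) + (c - b) by rewrite addrA subrK.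
by rewrite sqr_normD; have := ip_le_sqr_norm (a - c) (c - b); lra.
Qed.

Lemma sqr_norm_midpoint a b :
  `|2^-1 *: (a + b)| ^+ 2 = 2^-1 * (`|a| ^+ 2 + `|b| ^+ 2) - 4^-1 * `|a - b| ^+ 2.
Proof. by ip_expand; rewrite (ipC b a); field; rewrite ?pnatr_eq0. Qed.

Lemma sqr_norm_segment (t : R) y a :
  `|(1 - t) *: y + t *: a| ^+ 2 = `|y| ^+ 2 + t * (2 * ip y (a - y) + t * `|a - y| ^+ 2).
Proof. by ip_expand; rewrite (ipC a y); ring. Qed.

Lemma min_norm_variational (u : nat -> V) y a :
  u n @[n --> \oo] --> y ->
  (forall n t, 0 < t -> t <= 1 -> `|y| ^+ 2 <= `|(1 - t) *: u n + t *: a| ^+ 2) ->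
  `|y| ^+ 2 <= ip a y.
Proof.
move=> uy ymin; suff : 0 <= 2 * ip y (a - y) by rewrite ipBr ipxx ipC; lra.
apply: (@ge0_of_perturbation _ _ (`|a - y| ^+ 2)) => t t0 t1.
have segment_cvg : (1 - t) *: u n + t *: a @[n --> \oo] --> (1 - t) *: y + t *: a.
  by apply: cvgD; [apply: cvgZ => //; exact: cvg_cst | exact: cvg_cst].
have := cvg_ge_const (cvg_sqr_norm segment_cvg) (fun n => ymin n t t0 t1).
by rewrite sqr_norm_segment lerDl pmulr_rge0.
Qed.

Definition defect (p : V * V) w := ip (w - p.1) (w + p.2).

Lemma defectE p w :
  defect p w = `|w - 2^-1 *: (p.1 - p.2)| ^+ 2 - 4^-1 * `|p.1 + p.2| ^+ 2.
Proof.
rewrite /defect; ip_expand; rewrite ?(ipC p.2 w) ?(ipC p.1 w) ?(ipC p.2 p.1).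
by field; rewrite ?pnatr_eq0.
Qed.

Lemma defect_lb p w : - 4^-1 * `|p.1 + p.2| ^+ 2 <= defect p w.
Proof. by rewrite defectE; have := sqr_ge0 `|w - 2^-1 *: (p.1 - p.2)|; lra. Qed.

Lemma defect_le_gradient p w : defect p w <= 4^-1 * `|2 *: w + p.2 - p.1| ^+ 2.
Proof.
suff -> : 4^-1 * `|2 *: w + p.2 - p.1| ^+ 2 = defect p w + 4^-1 * `|p.1 + p.2| ^+ 2.
  by rewrite lerDl mulr_ge0 // sqr_ge0.
rewrite /defect; ip_expand; rewrite ?(ipC p.2 w) ?(ipC p.1 w) ?(ipC p.2 p.1).
by field; rewrite ?pnatr_eq0.
Qed.

Lemma defect_midpoint p a b :
  defect p (2^-1 *: (a + b)) = 2^-1 * (defect p a + defect p b) - 4^-1 * `|a - b| ^+ 2.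
Proof.
rewrite /defect; ip_expand.
rewrite ?(ipC p.2 a) ?(ipC p.1 a) ?(ipC p.2 p.1) ?(ipC p.2 b) ?(ipC p.1 b) ?(ipC b a).
by field; rewrite ?pnatr_eq0.
Qed.

Lemma defect_shift p w (t : R) e :
  defect p (w + t *: e) = defect p w + t * ip (2 *: w + p.2 - p.1) e + t ^+ 2 * `|e| ^+ 2.
Proof.
rewrite /defect; ip_expand.
rewrite ?(ipC p.2 w) ?(ipC p.1 w) ?(ipC p.2 p.1) ?(ipC p.2 e) ?(ipC p.1 e) ?(ipC e w).
by ring.
Qed.

Lemma continuous_defect p : continuous (defect p).
Proof.
have -> : defect p = fun w => `|w - 2^-1 *: (p.1 - p.2)| ^+ 2 - 4^-1 * `|p.1 + p.2| ^+ 2.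
  by apply: funext => w; exact: defectE.
move=> w; apply: cvgB; last exact: cvg_cst.
under eq_fun do rewrite expr2; rewrite expr2.
by apply: cvgM; apply: cvg_norm; apply: cvgB => //; exact: cvg_cst.
Qed.

Definition max_defect (p0 : V * V) (s : seq (V * V)) w :=
  \big[Num.max/defect p0 w]_(q <- p0 :: s) defect q w.

Lemma max_defect_ge p0 s q w : q \in p0 :: s -> defect q w <= max_defect p0 s w.
Proof. by move=> qs; exact: (le_bigmax_seq (defect p0 w) q xpredT (defect^~ w)). Qed.

Lemma max_defect_le p0 s w (b : R) :
  (forall q, q \in p0 :: s -> defect q w <= b) -> max_defect p0 s w <= b.
Proof.
by move=> sb; rewrite /max_defect big_seq; apply: bigmax_le => //; apply: sb; rewrite mem_head.
Qed.

Lemma max_defect_lt p0 s w (b : R) :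
  (forall q, q \in p0 :: s -> defect q w < b) -> max_defect p0 s w < b.
Proof.
by move=> sb; rewrite /max_defect big_seq; apply: bigmax_lt => //; apply: sb; rewrite mem_head.
Qed.

Lemma max_defect_subset p0 s t w :
  {subset s <= t} -> max_defect p0 s w <= max_defect p0 t w.
Proof.
move=> st; apply: max_defect_le => q; rewrite inE => /predU1P[->|qs].
  by apply: max_defect_ge; rewrite mem_head.
by apply: max_defect_ge; rewrite inE st ?orbT.
Qed.

Lemma max_defect_midpoint p0 s a b :
  max_defect p0 s (2^-1 *: (a + b))
    <= 2^-1 * (max_defect p0 s a + max_defect p0 s b) - 4^-1 * `|a - b| ^+ 2.
Proof.
apply: max_defect_le => q qs; rewrite defect_midpoint.
by have := max_defect_ge a qs; have := max_defect_ge b qs; lra.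
Qed.

Lemma continuous_max_defect p0 s : continuous (max_defect p0 s).
Proof.
rewrite /max_defect; elim: (p0 :: s) => [|q l IH].
  under eq_fun do rewrite big_nil; exact: continuous_defect.
under eq_fun do rewrite big_cons.
by move=> w; apply: continuous_max; [exact: continuous_defect | exact: IH].
Qed.

Lemma exists_max_defect_minimizer p0 s :
  exists w, forall z, max_defect p0 s w <= max_defect p0 s z.
Proof.
have [w [_ [_ _ wmin]]] := exists_minimizer (C := setT) (f := max_defect p0 s)
  (lb := - 4^-1 * `|p0.1 + p0.2| ^+ 2) (ex_intro _ 0 I) (fun _ _ _ _ => I)
  (fun z _ => le_trans (defect_lb p0 z) (max_defect_ge z (mem_head p0 s)))
  (fun a b _ _ => @max_defect_midpoint p0 s a b) (@continuous_max_defect p0 s).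
by exists w => z; apply: wmin.
Qed.

Definition max_defect_argmin p0 s :=
  get [set w | forall z, max_defect p0 s w <= max_defect p0 s z].

Definition min_max_defect p0 s := max_defect p0 s (max_defect_argmin p0 s).

Lemma min_max_defect_le p0 s z : min_max_defect p0 s <= max_defect p0 s z.
Proof. exact: (getPex (exists_max_defect_minimizer p0 s)). Qed.

Lemma min_max_defect_gap p0 s t : {subset s <= t} ->
  2^-1 * `|max_defect_argmin p0 t - max_defect_argmin p0 s| ^+ 2
    <= min_max_defect p0 t - min_max_defect p0 s.
Proof.
move=> st; set wt := max_defect_argmin p0 t; set ws := max_defect_argmin p0 s.
have := max_defect_midpoint p0 s wt ws; have := min_max_defect_le p0 s (2^-1 *: (wt + ws)).
by have := max_defect_subset p0 wt st; rewrite /min_max_defect -/wt -/ws; lra.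
Qed.

Lemma max_defect_descent p0 s w y (eta : R) : 0 < eta -> 0 < `|y| ^+ 2 ->
  (forall q, q \in p0 :: s -> max_defect p0 s w - eta <= defect q w ->
     `|y| ^+ 2 <= ip (2 *: w + q.2 - q.1) y) ->
  exists z, max_defect p0 s z < max_defect p0 s w.
Proof.
move=> eta0 y0 ascent; set m := max_defect p0 s w.
pose B := \big[Num.max/0]_(q <- p0 :: s) `|ip (2 *: w + q.2 - q.1) y|.
have le_B q : q \in p0 :: s -> `|ip (2 *: w + q.2 - q.1) y| <= B.
  by move=> qs; exact: (le_bigmax_seq 0 q xpredT (fun q => `|ip (2 *: w + q.2 - q.1) y|)).
have B0 : 0 <= B by apply: le_trans (le_B _ (mem_head p0 s)).
pose t := eta / (2 * (B + `|y| ^+ 2 + eta)).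
have den0 : 0 < 2 * (B + `|y| ^+ 2 + eta) by lra.
have t0 : 0 < t by rewrite divr_gt0.
have tden : t * (2 * (B + `|y| ^+ 2 + eta)) = eta by rewrite /t divfK // gt_eqF.
have t1 : t < 1 by rewrite /t ltr_pdivrMr // mul1r; lra.
have tt : t ^+ 2 * `|y| ^+ 2 < t * `|y| ^+ 2 by rewrite ltr_pM2r // expr2 gtr_pMr.
exists (w + t *: - y); apply: max_defect_lt => q qs.
rewrite defect_shift normrN ipNr.
have := max_defect_ge w qs; rewrite -/m => qm.
have [active|inactive] := lerP (m - eta) (defect q w).
  by have := ascent q qs active; nra.
have : - ip (2 *: w + q.2 - q.1) y <= B.
  by apply: le_trans (le_B q qs); rewrite -normrN ler_norm.
nra.
Qed.

Lemma min_norm_hull n (a : 'I_n -> V) (P : pred 'I_n) (r : R) :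
  (exists i, P i) -> (forall c, convex_hull a P c -> r <= `|c| ^+ 2) ->
  exists y, r <= `|y| ^+ 2 /\ forall i, P i -> `|y| ^+ 2 <= ip (a i) y.
Proof.
move=> [i0 Pi0] hull_r.
have mid b c : `|2^-1 *: (b + c)| ^+ 2
    <= 2^-1 * (`|b| ^+ 2 + `|c| ^+ 2) - 4^-1 * `|b - c| ^+ 2.
  by rewrite sqr_norm_midpoint.
have [y [u [Cu uy ymin]]] := exists_minimizer (f := fun c => `|c| ^+ 2) (lb := 0)
  (ex_intro _ _ (convex_hull_point a Pi0)) (@midpoint_convex_hull _ _ _ a P)
  (fun c _ => sqr_ge0 _) (fun b c _ _ => mid b c)
  (@continuous_sqr_norm _ V).
exists y; split; first exact: cvg_ge_const (cvg_sqr_norm uy) (fun n => hull_r _ (Cu n)).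
move=> i Pi; apply: (min_norm_variational uy) => k t t0 t1; apply: ymin.
exact: convex_hull_segment (Cu k) (convex_hull_point a Pi) (ltW t0) t1.
Qed.

Section ConvexCombination.
Variables (n : nat) (pt : 'I_n -> V * V) (lam : 'I_n -> R).
Hypothesis pt_mono : forall i j, 0 <= ip ((pt i).1 - (pt j).1) ((pt i).2 - (pt j).2).
Hypotheses (lam_ge0 : forall i, 0 <= lam i) (lam_sum1 : \sum_i lam i = 1).

Let X := \sum_i lam i *: (pt i).1.
Let U := \sum_i lam i *: (pt i).2.
Let S := \sum_i lam i * ip (pt i).1 (pt i).2.

Lemma ip_convex_le : ip X U <= S.
Proof.
have inner_sum i : \sum_j lam j * ip ((pt i).1 - (pt j).1) ((pt i).2 - (pt j).2)
    = ip (pt i).1 (pt i).2 - ip (pt i).1 U - ip X (pt i).2 + S.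
  transitivity (\sum_j (lam j * ip (pt i).1 (pt i).2 - lam j * ip (pt i).1 (pt j).2
     - lam j * ip (pt j).1 (pt i).2 + lam j * ip (pt j).1 (pt j).2)).
    by apply: eq_bigr => j _; ip_expand; ring.
  rewrite !big_split /= !sumrN -mulr_suml lam_sum1 mul1r ip_sumr ip_suml.
  by congr (_ - _ - _ + _); apply: eq_bigr => j _; rewrite ?ipZr ?ipZl.
have double_sum : \sum_i lam i * \sum_j lam j * ip ((pt i).1 - (pt j).1) ((pt i).2 - (pt j).2)
    = 2 * S - 2 * ip X U.
  under eq_bigr do rewrite inner_sum.
  transitivity (\sum_i (lam i * ip (pt i).1 (pt i).2 - lam i * ip (pt i).1 U
     - lam i * ip X (pt i).2 + lam i * S)).
    by apply: eq_bigr => i _; ring.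
  rewrite !big_split /= !sumrN -mulr_suml lam_sum1 mul1r.
  have -> : \sum_i lam i * ip (pt i).1 U = ip X U.
    by rewrite ip_suml; apply: eq_bigr => i _; rewrite ipZl.
  have -> : \sum_i lam i * ip X (pt i).2 = ip X U.
    by rewrite ip_sumr; apply: eq_bigr => i _; rewrite ipZr.
  by rewrite /S; ring.
have : 0 <= \sum_i lam i * \sum_j lam j * ip ((pt i).1 - (pt j).1) ((pt i).2 - (pt j).2).
  by apply: sumr_ge0 => i _; apply: mulr_ge0 => //; apply: sumr_ge0 => j _; apply: mulr_ge0.
by rewrite double_sum; lra.
Qed.

Lemma convex_defect_le w :
  \sum_i lam i * defect (pt i) w
    <= 4^-1 * `|\sum_i lam i *: (2 *: w + (pt i).2 - (pt i).1)| ^+ 2.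
Proof.
have -> : \sum_i lam i *: (2 *: w + (pt i).2 - (pt i).1) = 2 *: w + U - X.
  under eq_bigr do rewrite !scalerDr scalerN.
  by rewrite !big_split /= sumrN -scaler_suml lam_sum1 scale1r.
have -> : \sum_i lam i * defect (pt i) w = defect (X, U) w + ip X U - S.
  transitivity (\sum_i (lam i * ip w w + lam i * ip w (pt i).2
       - lam i * ip (pt i).1 w - lam i * ip (pt i).1 (pt i).2)).
    by apply: eq_bigr => i _; rewrite /defect; ip_expand; ring.
  rewrite !big_split /= !sumrN -mulr_suml lam_sum1 /defect /= -/S.
  have -> : \sum_i lam i * ip w (pt i).2 = ip w U.
    by rewrite ip_sumr; apply: eq_bigr => i _; rewrite ipZr.
  have -> : \sum_i lam i * ip (pt i).1 w = ip X w.
    by rewrite ip_suml; apply: eq_bigr => i _; rewrite ipZl.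
  by ip_expand; ring.
by have := defect_le_gradient (X, U) w; have := ip_convex_le; lra.
Qed.

End ConvexCombination.

Lemma min_max_defect_le0 p0 s :
  (forall p q, p \in p0 :: s -> q \in p0 :: s -> 0 <= ip (p.1 - q.1) (p.2 - q.2)) ->
  min_max_defect p0 s <= 0.
Proof.
move=> mono; rewrite /min_max_defect; set w := max_defect_argmin p0 s.
set m := max_defect p0 s w; rewrite leNgt; apply/negP => m0.
pose pt := tnth (in_tuple (p0 :: s)).
have pt_in i : pt i \in p0 :: s by exact: mem_tnth.
have pt_onto q : q \in p0 :: s -> exists i, q = pt i by move/(tuple.tnthP (in_tuple _)).
pose active := [pred i | m - m / 4 <= defect (pt i) w].
have [i0 active_i0] : exists i, active i.
  have [//|none] := pselect (exists i, active i).
  suff : m < m by rewrite ltxx.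
  apply: max_defect_lt => q /pt_onto[i ->]; rewrite ltNge; apply/negP => mi.
  by apply: none; exists i; rewrite inE; lra.
have hull_large c :
    convex_hull (fun i => 2 *: w + (pt i).2 - (pt i).1) active c -> 3 * m <= `|c| ^+ 2.
  move=> [lam [lam0 lam1 lamP ->]].
  have := convex_defect_le (fun i j => mono _ _ (pt_in i) (pt_in j)) lam0 lam1 w.
  have : \sum_i lam i * (m - m / 4) <= \sum_i lam i * defect (pt i) w.
    apply: ler_sum => i _; have [->|/lamP ai] := eqVneq (lam i) 0; first by rewrite !mul0r.
    by rewrite ler_wpM2l.
  rewrite -mulr_suml lam1 mul1r.
  lra.
have [y [y_large y_ascent]] := min_norm_hull (ex_intro _ i0 active_i0) hull_large.
have [|||z] := @max_defect_descent p0 s w y (m / 4).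
- by rewrite divr_gt0.
- by lra.
- by move=> q /pt_onto[i ->] ai; exact: y_ascent.
by have := min_max_defect_le p0 s z; rewrite /min_max_defect -/w -/m; lra.
Qed.

Lemma monotone_common_point (G : set (V * V)) :
  (forall p q, G p -> G q -> 0 <= ip (p.1 - q.1) (p.2 - q.2)) -> G !=set0 ->
  exists w, forall q, G q -> defect q w <= 0.
Proof.
move=> mono [p0 Gp0].
pose W := max_defect_argmin p0; pose val := min_max_defect p0.
pose inG (s : seq (V * V)) := forall q, q \in s -> G q.
have val_le0 s : inG s -> val s <= 0.
  move=> sG; apply: min_max_defect_le0 => p q.
  by rewrite !inE => /predU1P[->|/sG Gp] /predU1P[->|/sG Gq]; apply: mono.
pose vals := [set val s | s in inG].
have vals_sup : has_sup vals.
  split; first by exists (val [::]), [::] => // q; rewrite in_nil.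
  by exists 0 => _ [s sG <-]; exact: val_le0.
have near_sup n : exists s, inG s /\ sup vals - n.+1%:R^-1 < val s.
  have [|_ [s sG <-] vs] := @sup_adherent _ vals n.+1%:R^-1 _ vals_sup; first by rewrite invr_gt0.
  by exists s.
have [sq sqP] := choice near_sup.
have W_close t n : inG t -> {subset sq n <= t} -> `|W t - W (sq n)| ^+ 2 <= 2 * n.+1%:R^-1.
  move=> tG st; have := min_max_defect_gap p0 st.
  rewrite -/(W t) -/(W (sq n)) -/(val t) -/(val (sq n)).
  have := sup_upper_bound vals_sup (ex_intro2 _ _ t tG erefl).
  by have [_] := sqP n; move: (val t) (val (sq n)) (n.+1%:R^-1) => a b e; lra.
have sq_cvg : cvg (W (sq n) @[n --> \oo]).
  apply: (@cauchy_sqr_dist_harmonic _ _ _ 4) => n k.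
  have tG : inG (sq n ++ sq k) by move=> q; rewrite mem_cat => /orP[/(sqP n).1|/(sqP k).1].
  have sub_n : {subset sq n <= sq n ++ sq k} by move=> q qn; rewrite mem_cat qn.
  have sub_k : {subset sq k <= sq n ++ sq k} by move=> q qk; rewrite mem_cat qk orbT.
  have := W_close _ n tG sub_n; have := W_close _ k tG sub_k.
  have := sqr_dist_le (W (sq n)) (W (sq k)) (W (sq n ++ sq k)).
  rewrite (distrC (W (sq n)) (W (sq n ++ sq k))); move: (n.+1%:R^-1) (k.+1%:R^-1) => a b; lra.
exists (lim (W (sq n) @[n --> \oo])) => q Gq.
have qsq_cvg : W (q :: sq n) @[n --> \oo] --> lim (W (sq n) @[n --> \oo]).
  apply: (cvg_sqr_dist_harmonic sq_cvg) => n; apply: W_close => [r|r rn].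
    by rewrite inE => /predU1P[->|/(sqP n).1].
  by rewrite inE rn orbT.
apply: (cvg_le_const (continuous_cvg _ (@continuous_defect q _) qsq_cvg)) => n.
apply: le_trans (val_le0 _ _); first by apply: max_defect_ge; rewrite !inE eqxx orbT.
by move=> r; rewrite inE => /predU1P[->|/(sqP n).1].
Qed.

Lemma maximal_monotone_related (A : V -> set V) y v :
  maximal_monotone ip A -> (forall x u, A x u -> 0 <= ip (x - y) (u - v)) -> A y v.
Proof.
move=> [Amono Amax] yv_rel; pose B x u := A x u \/ (x = y /\ u = v).
have Bmono : monotone_op ip B.
  move=> x1 x2 u1 u2 [A1|[-> ->]] [A2|[-> ->]].
  - exact: Amono.
  - exact: yv_rel.
  - by rewrite -opprB ipNl -(opprB u2) ipNr opprK; exact: yv_rel.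
  - by rewrite subrr ip0l.
by apply: (Amax B Bmono _ y v); [move=> x u; left | right].
Qed.

Lemma resolvent_graph (A : V -> set V) g z :
  maximal_monotone ip A -> 0 < g -> (exists x u, A x u) ->
  A (resolvent A g z) (g^-1 *: (z - resolvent A g z)).
Proof.
move=> Amax g0 [x0 [u0 Ax0]].
suff : exists y, A y (g^-1 *: (z - y)) by move=> ex_y; exact: (getPex ex_y).
pose G := [set p : V * V | exists x u, A x u /\ p = (x - z, g *: u)].
have Gmono p q : G p -> G q -> 0 <= ip (p.1 - q.1) (p.2 - q.2).
  move=> [x1 [u1 [A1 ->]]] [x2 [u2 [A2 ->]]] /=.
  rewrite opprB addrA subrK -scalerBr ipZr; apply: mulr_ge0; [exact: ltW | exact: Amax.1 A1 A2].
have G_ne : G !=set0 by exists (x0 - z, g *: u0), x0, u0.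
have [w wG] := monotone_common_point Gmono G_ne.
exists (w + z); apply: maximal_monotone_related Amax _ => x u Axu.
have := wG _ (ex_intro _ x (ex_intro _ u (conj Axu erefl))).
have -> : defect (x - z, g *: u) w = - g * ip (x - (w + z)) (u - g^-1 *: (z - (w + z))).
  by rewrite /defect /=; ip_expand; field; rewrite gt_eqF.
by rewrite mulNr oppr_le0 pmulr_rge0.
Qed.

Lemma resolvent_nonexpansive (A : V -> set V) g z1 z2 :
  maximal_monotone ip A -> 0 < g -> (exists x u, A x u) ->
  `|resolvent A g z1 - resolvent A g z2| <= `|z1 - z2|.
Proof.
move=> Amax g0 graph_ne.
have := Amax.1 _ _ _ _ (resolvent_graph z1 Amax g0 graph_ne) (resolvent_graph z2 Amax g0 graph_ne).
set y1 := resolvent A g z1; set y2 := resolvent A g z2.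
have -> : g^-1 *: (z1 - y1) - g^-1 *: (z2 - y2) = g^-1 *: ((z1 - z2) - (y1 - y2)).
  by rewrite -scalerBr; congr (_ *: _); rewrite !opprB addrACA [in RHS]addrACA (addrC (- y1)).
rewrite ipZr ipBr ipxx pmulr_rge0 ?invr_gt0 // subr_ge0 => mono12.
have := ip_le_sqr_norm (y1 - y2) (z1 - z2) => ip_le.
by rewrite -(@ler_pXn2r _ 2) ?nnegrE //; lra.
Qed.

End InnerProductSpace.

Lemma nonexpansive_iter_dist (R : realFieldType) (V : normedModType R)
    (T : nat -> V -> V) (x : nat -> V) :
  (forall i a b, `|T i a - T i b| <= `|a - b|) -> (forall n, x n.+1 = T n (x n)) ->
  forall n m p, `|x (n + m)%N - p| <= `|x n - p| + \sum_(n <= i < n + m) `|p - T i p|.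
Proof.
move=> T_ne x_rec n m p; elim: m => [|m IH]; first by rewrite addn0 big_geq // addr0.
rewrite addnS x_rec big_nat_recr ?leq_addr //=.
have := ler_distD (T (n + m)%N p) (T (n + m)%N (x (n + m)%N)) p.
rewrite (distrC (T _ p) p); have := T_ne (n + m)%N (x (n + m)%N) p; lra.
Qed.

Lemma AF_chi_sum_lt (R : realType) (V : normedModType R) (A : V -> set V) gamma
    (r n m l : nat) p :
  AF A gamma (chi n m r) p -> (l <= m)%N ->
  \sum_(n <= i < n + l) `|p - resolvent A (gamma i) p| < r.+1%:R^-1.
Proof.
move=> pAF; case: l => [_|l lm]; first by rewrite addn0 big_geq // invr_gt0.
apply: (@le_lt_trans _ _ (\sum_(n <= i < n + l.+1) (chi n m r).+1%:R^-1)).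
  by apply: ler_sum_nat => i /andP[_ ilt]; apply: pAF; rewrite /chi leq_max; lia.
rewrite sumr_const_nat addnC addnK -[_ *+ l.+1]mulr_natl.
rewrite ltr_pdivrMr ?ltr0n // mulrC ltr_pdivlMr ?ltr0n // -natrM ltr_nat ltnS.
by rewrite /chi; apply: leq_trans (leq_maxr _ _); rewrite leq_mul2r lm orbT.
Qed.

Theorem lemma8p1 (R : realType) (V : completeNormedModType R)
  (ip : V -> V -> R) (A : V -> set V) (gamma : nat -> R) (x : nat -> V) :
  inner_product ip ->
  maximal_monotone ip A ->
  zer A !=set0 ->
  (forall n, 0 < gamma n) ->
  (forall n, x n.+1 = resolvent A (gamma n) (x n)) ->
  (forall (n m : nat) (p : V), (1 <= m)%N ->
     `|x (n + m)%N - p| <= `|x n - p|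
        + \sum_(n <= i < n + m) `|p - resolvent A (gamma i) p|)
  /\
  (forall (r n m : nat) (p : V), AF A gamma (chi n m r) p ->
     forall l : nat, (l <= m)%N ->
       `|x (n + l)%N - p| < `|x n - p| + (r.+1%:R)^-1).
Proof.
move=> ip_inner Amax [p0 Ap0] gamma_gt0 x_rec.
have J_ne i a b : `|resolvent A (gamma i) a - resolvent A (gamma i) b| <= `|a - b|.
  by apply: resolvent_nonexpansive ip_inner _ _ _ _ Amax (gamma_gt0 i) _; exists p0, 0.
have dist_le := nonexpansive_iter_dist J_ne x_rec.
split=> [n m p _ | r n m p pAF l lm]; first exact: dist_le.
by apply: le_lt_trans (dist_le n l p) _; rewrite ltrD2l; exact: AF_chi_sum_lt pAF lm.
Qed.
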